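(* Consider observations $y_i = y(t_i) = F(x_0)(t_i) + \epsilon_i$, $i=1,\dots,n$, where $F:\mathbf X\to\mathbf Y$ is a known linear operator between Hilbert spaces of real functions, $t_1,\dots,t_n$ is a fixed design, and $\epsilon_1,\dots,\epsilon_n$ are independent errors with zero mean and finite variance $\sigma^2$. Let $(\lambda_j;\varphi_j,\psi_j)_{j=1,\dots,n}$ be a singular system of $F$ as described in the context, write $x_0=\sum_{j=1}^n x_{j,0}\psi_j$, fix a constant $c>0$ and put $\mu_j = \frac{2c}{\lambda_j}\sqrt{\frac{\log n}{n}}$, $j=1,\dots,n$. Let $$\hat x_n=\sum_{j=1}^n \hat x_j\psi_j \in \arg\min_{x=\sum_{j=1}^n x_j\psi_j\in \mathbf X}\Big[\sum_{j=1}^n\Big|\Big\langle y-F(x),\frac{\varphi_j}{\lambda_j}\Big\rangle_n\Big|^2+\sum_{j=1}^n\mu_j|x_j|\Big].$$ Let $x_*=\sum_{j=1}^n x_{j,*}\psi_j$ with $x_{j,*}=x_{j,0}$ if $|x_{j,0}|>\mu_j$ and $x_{j,*}=0$ otherwise, let $\mathcal J_n=\{j\in\{1,\dots,n\}: |x_{j,0}|>\mu_j\}$, let $V_j=\frac1n\sum_{i=1}^n\varphi_j(t_i)\epsilon_i$, and let $B_n$ be the event $\{\max_{j=1,\dots,n}|V_j|\le c\sqrt{\log n/n}\}$. Then on $B_n$, $$\|\hat x_n-x_0\|_n^2\le \|x_*-x_0\|_n^2+4c\sqrt{\frac{\log n}{n}}\sum_{j\in\mathcal J_n}\frac{|\hat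 x_j-x_{j,0}|}{\lambda_j}.$$
   Context: The empirical norm is $\|y\|_n^2=\frac1n\sum_{i=1}^n y(t_i)^2$ with empirical inner product $\langle y,z\rangle_n=\frac1n\sum_{i=1}^n y(t_i)z(t_i)$; for $y=(y_i)$ a data vector, $\langle y,\varphi\rangle_n=\frac1n\sum_i y_i\varphi(t_i)$. The singular system satisfies $F\psi_j=\lambda_j\varphi_j$, $F^*\varphi_j=\lambda_j\psi_j$, where $\lambda_j^2>0$ are the nonzero eigenvalues of $F^*F$ in decreasing order, and $\{\psi_j\}$, $\{\varphi_j\}$ are complete orthonormal systems with respect to $\|\cdot\|_n$ of eigenvectors of $F^*F$ and $FF^*$ respectively; thus $Fx=\sum_j\lambda_j\langle x,\psi_j\rangle\varphi_j$, and for $x=\sum_j x_j\psi_j$, $\|x\|_n^2=\sum_j x_j^2$. *)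

From mathcomp Require Import all_boot all_order all_algebra.
From mathcomp Require Import reals exp.
Set Implicit Arguments. Unset Strict Implicit. Unset Printing Implicit Defensive.
Import Order.TTheory GRing.Theory Num.Theory.
Local Open Scope ring_scope.

Section Defs.
Variables (R : realType) (T : Type) (n : nat) (t : 'I_n -> T).

Definition emp_inner (f g : T -> R) : R :=
  n%:R^-1 * \sum_(i < n) f (t i) * g (t i).

Definition emp_norm2 (f : T -> R) : R := emp_inner f f.

Definition emp_inner_data (y : 'I_n -> R) (g : T -> R) : R :=
  n%:R^-1 * \sum_(i < n) y i * g (t i).

Definition comb (psi : 'I_n -> T -> R) (a : 'I_n -> R) : T -> R :=
  fun s => \sum_(j < n) a j * psi j s.

Definition rate : R := Num.sqrt (ln n%:R / n%:R).

End Defs.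

(* In the singular bases the criterion separates over coordinates: with
   [v_j = V_j / lam_j] and [d_j = c r / lam_j] (so [mu_j = 2 d_j], and
   [|v_j| <= d_j] on B_n) it is [J b = sum_j ((a_j - b_j + v_j)^2 + 2 d_j |b_j|)].
   In one coordinate, comparing this term at [x] with its value at the truth
   [a] (when [2 d < |a|]) or at [0] (otherwise) bounds [(x - a)^2] by the oracle
   error plus [4 d |x - a|] (first case only) plus the increase of the term.
   Summing and using [J xh <= J astar] gives the inequality for coefficients,
   and Parseval turns it into the one for empirical norms. *)
From mathcomp Require Import all_boot all_order all_algebra.
From mathcomp Require Import reals exp.
From mathcomp Require Import ring lra.
From Stdlib Require Import FunctionalExtensionality.
Set Implicit Arguments. Unset Strict Implicit. Unset Printing Implicit Defensive.
Import Order.TTheory GRing.Theory Num.Theory.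
Local Open Scope ring_scope.

Section LinearCombination.
Variables (R : pzRingType) (T : Type) (F : (T -> R) -> (T -> R)).
Hypothesis F_linear : forall (a : R) (f g : T -> R),
  F (fun s => a * f s + g s) = (fun s => a * F f s + F g s).

Lemma linear_fun0 : F (fun _ => 0) = (fun _ => 0).
Proof.
have F00 := F_linear 1 (fun _ => 0) (fun _ => 0).
have zero_eq : (fun _ : T => 1 * 0 + 0 : R) = (fun _ => 0).
  by apply: functional_extensionality => s; rewrite mul1r addr0.
rewrite /= zero_eq in F00; apply: functional_extensionality => s.
by have := congr1 (fun f => f s) F00; rewrite /= mul1r -{1}[F _ s]addr0 => /addrI/esym.
Qed.

Lemma linear_fun_sum (I : Type) (r : seq I) (b : I -> R) (g : I -> T -> R) :
  F (fun s => \sum_(k <- r) b k * g k s) = (fun s => \sum_(k <- r) b k * F (g k) s).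
Proof.
elim: r => [|k r IHr].
  have -> : (fun s => \sum_(k <- [::]) b k * g k s) = (fun _ => 0).
    by apply: functional_extensionality => s; rewrite big_nil.
  by rewrite linear_fun0; apply: functional_extensionality => s; rewrite big_nil.
have -> : (fun s => \sum_(j <- k :: r) b j * g j s)
        = (fun s => b k * g k s + \sum_(j <- r) b j * g j s).
  by apply: functional_extensionality => s; rewrite big_cons.
rewrite (F_linear (b k) (g k) (fun s => \sum_(j <- r) b j * g j s)) IHr.
by apply: functional_extensionality => s; rewrite big_cons.
Qed.

End LinearCombination.

Section EmpiricalInnerProduct.
Variables (R : realType) (T : Type) (n : nat) (t : 'I_n -> T).

Definition orthonormal (e : 'I_n -> T -> R) :=
  forall j k, emp_inner t (e j) (e k) = (j == k)%:R.

Lemma emp_innerC (f g : T -> R) : emp_inner t f g = emp_inner t g f.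
Proof. by rewrite /emp_inner; under eq_bigr do rewrite mulrC. Qed.

Lemma emp_inner_combl (e : 'I_n -> T -> R) (u : 'I_n -> R) (g : T -> R) :
  emp_inner t (comb e u) g = \sum_(k < n) u k * emp_inner t (e k) g.
Proof.
rewrite /emp_inner /comb; under eq_bigr do rewrite mulr_suml.
rewrite exchange_big mulr_sumr; apply: eq_bigr => k _.
by rewrite mulrCA [X in _ = _ * X]mulr_sumr; under eq_bigr do rewrite -mulrA.
Qed.

Lemma emp_inner_comb_basis (e : 'I_n -> T -> R) (u : 'I_n -> R) (k : 'I_n) :
  orthonormal e -> emp_inner t (comb e u) (e k) = u k.
Proof.
move=> e_on; rewrite emp_inner_combl (bigD1 k) //= e_on eqxx mulr1 big1 ?addr0 //.
by move=> j /negbTE jk; rewrite e_on jk mulr0.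
Qed.

Lemma emp_norm2_comb (e : 'I_n -> T -> R) (u : 'I_n -> R) :
  orthonormal e -> emp_norm2 t (comb e u) = \sum_(k < n) u k ^+ 2.
Proof.
move=> e_on; rewrite /emp_norm2 emp_inner_combl; apply: eq_bigr => k _.
by rewrite emp_innerC emp_inner_comb_basis // expr2.
Qed.

Lemma comb_sub (e : 'I_n -> T -> R) (u w : 'I_n -> R) :
  (fun s => comb e u s - comb e w s) = comb e (fun k => u k - w k).
Proof.
apply: functional_extensionality => s; rewrite /comb -sumrB.
by apply: eq_bigr => k _; rewrite mulrBl.
Qed.

Lemma emp_inner_data_comb (e : 'I_n -> T -> R) (u eps : 'I_n -> R) (g : T -> R) :
  emp_inner_data t (fun i => comb e u (t i) + eps i) g
  = emp_inner t (comb e u) g + emp_inner_data t eps g.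
Proof.
rewrite /emp_inner_data /emp_inner -mulrDr -big_split /=.
by congr (_ * _); apply: eq_bigr => i _; rewrite mulrDl.
Qed.

Lemma emp_inner_data_scaler (z : 'I_n -> R) (g : T -> R) (l : R) :
  emp_inner_data t z (fun s => g s / l) = emp_inner_data t z g / l.
Proof.
rewrite /emp_inner_data -mulrA mulr_suml; congr (_ * _).
by apply: eq_bigr => i _; rewrite mulrA.
Qed.

End EmpiricalInnerProduct.

Section CoordinateBound.
Variable R : realType.

(* One coordinate of the criterion: [a] is the true coefficient, [v] the
   noise coefficient divided by [lam_j], and [d] half the threshold [mu_j]. *)
Definition lasso_term (a v d x : R) : R := (a - x + v) ^+ 2 + 2 * d * `|x|.

Lemma lasso_term_sub_truth (a v d x : R) : 0 <= d -> `|v| <= d ->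
  (x - a) ^+ 2 <= lasso_term a v d x - lasso_term a v d a + 4 * d * `|x - a|.
Proof.
move=> d_ge0 v_le_d; rewrite /lasso_term subrr add0r.
have xv : (x - a) * v <= `|x - a| * d.
  by rewrite (le_trans (ler_norm _)) // normrM ler_wpM2l.
have ax : d * (`|a| - `|x|) <= d * `|x - a|.
  by rewrite ler_wpM2l // distrC lerB_dist.
nra.
Qed.

Lemma lasso_term_sub_zero (a v d x : R) : `|v| <= d ->
  (x - a) ^+ 2 <= a ^+ 2 + lasso_term a v d x - lasso_term a v d 0.
Proof.
move=> v_le_d; rewrite /lasso_term normr0 mulr0 addr0 subr0.
have xv : x * v <= `|x| * d by rewrite (le_trans (ler_norm _)) // normrM ler_wpM2l.
nra.
Qed.

Definition oracle_coef (a d : R) : R := if 2 * d < `|a| then a else 0.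

Lemma lasso_term_oracle (a v d x : R) : 0 <= d -> `|v| <= d ->
  (x - a) ^+ 2 <= (oracle_coef a d - a) ^+ 2
                  + (if 2 * d < `|a| then 4 * d * `|x - a| else 0)
                  + (lasso_term a v d x - lasso_term a v d (oracle_coef a d)).
Proof.
move=> d_ge0 v_le_d; rewrite /oracle_coef; case: ifP => _.
  by rewrite subrr expr0n add0r [leRHS]addrC; apply: lasso_term_sub_truth.
by rewrite sub0r sqrrN addr0 addrA; apply: lasso_term_sub_zero.
Qed.

Lemma lasso_oracle_inequality (I : finType) (a v d x : I -> R) :
  (forall j, 0 <= d j) -> (forall j, `|v j| <= d j) ->
  \sum_j lasso_term (a j) (v j) (d j) (x j)
    <= \sum_j lasso_term (a j) (v j) (d j) (oracle_coef (a j) (d j)) ->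
  \sum_j (x j - a j) ^+ 2
    <= \sum_j (oracle_coef (a j) (d j) - a j) ^+ 2
       + \sum_j (if 2 * d j < `|a j| then 4 * d j * `|x j - a j| else 0).
Proof.
move=> d_ge0 v_le_d crit_le.
have coord_sum : \sum_j (x j - a j) ^+ 2 <=
    \sum_j (oracle_coef (a j) (d j) - a j) ^+ 2
    + \sum_j (if 2 * d j < `|a j| then 4 * d j * `|x j - a j| else 0)
    + (\sum_j lasso_term (a j) (v j) (d j) (x j)
       - \sum_j lasso_term (a j) (v j) (d j) (oracle_coef (a j) (d j))).
  by rewrite -sumrB -!big_split; apply: ler_sum => j _; apply: lasso_term_oracle.
lra.
Qed.

End CoordinateBound.

Section SingularSystem.
Variables (R : realType) (T : Type) (n : nat) (t : 'I_n -> T).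
Variables (F : (T -> R) -> (T -> R)) (lam : 'I_n -> R) (phi psi : 'I_n -> T -> R).
Hypothesis F_linear : forall (a : R) (f g : T -> R),
  F (fun s => a * f s + g s) = (fun s => a * F f s + F g s).
Hypothesis phi_orthonormal : orthonormal t phi.
Hypothesis F_psi : forall j, F (psi j) = (fun s => lam j * phi j s).

Lemma F_comb (b : 'I_n -> R) :
  F (comb psi b) = comb phi (fun k => b k * lam k).
Proof.
rewrite /comb linear_fun_sum //; apply: functional_extensionality => s.
by apply: eq_bigr => k _; rewrite F_psi mulrA.
Qed.

Lemma emp_inner_residual (a b eps : 'I_n -> R) (j : 'I_n) : lam j != 0 ->
  emp_inner_data t (fun i => F (comb psi a) (t i) + eps i - F (comb psi b) (t i))
                   (fun s => phi j s / lam j)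
  = a j - b j + emp_inner_data t eps (phi j) / lam j.
Proof.
move=> lam_neq0.
have resid : (fun i => F (comb psi a) (t i) + eps i - F (comb psi b) (t i))
           = (fun i => comb phi (fun k => (a k - b k) * lam k) (t i) + eps i).
  apply: functional_extensionality => i; rewrite !F_comb addrAC /comb -sumrB.
  by congr (_ + _); apply: eq_bigr => k _; rewrite !mulrBl.
rewrite resid emp_inner_data_scaler emp_inner_data_comb emp_inner_comb_basis //.
by rewrite mulrDl mulfK.
Qed.

End SingularSystem.

Theorem theorem1 (R : realType) (T : Type) (n : nat) (t : 'I_n -> T)
    (F : (T -> R) -> (T -> R))
    (lam : 'I_n -> R) (phi psi : 'I_n -> T -> R)
    (a0 eps xh : 'I_n -> R) (c : R) :
  (* F is linear *)
  (forall (a : R) (f g : T -> R),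
      F (fun s => a * f s + g s) = (fun s => a * F f s + F g s)) ->
  (* singular system *)
  (forall j, 0 < lam j) ->
  (forall j k : 'I_n, (j <= k)%N -> lam k <= lam j) ->
  (forall j k, emp_inner t (phi j) (phi k) = (j == k)%:R) ->
  (forall j k, emp_inner t (psi j) (psi k) = (j == k)%:R) ->
  (forall j, F (psi j) = (fun s => lam j * phi j s)) ->
  0 < c ->
  let r := rate R n in
  let mu := fun j => 2 * c / lam j * r in
  let y := fun i => F (comb psi a0) (t i) + eps i in
  let J := fun b : 'I_n -> R =>
    \sum_(j < n)
       (emp_inner_data t (fun i => y i - F (comb psi b) (t i))
                         (fun s => phi j s / lam j)) ^+ 2
    + \sum_(j < n) mu j * `|b j| in
  (* xh is a minimizer of the penalized criterion *)
  (forall b : 'I_n -> R, J xh <= J b) ->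
  let astar := fun j => if mu j < `|a0 j| then a0 j else 0 in
  let V := fun j => n%:R^-1 * \sum_(i < n) phi j (t i) * eps i in
  (* the event B_n *)
  (forall j, `|V j| <= c * r) ->
  emp_norm2 t (fun s => comb psi xh s - comb psi a0 s)
  <= emp_norm2 t (fun s => comb psi astar s - comb psi a0 s)
     + 4 * c * r * \sum_(j < n | mu j < `|a0 j|) `|xh j - a0 j| / lam j.
Proof.
move=> F_lin lam_gt0 _ phi_on psi_on F_psi c_gt0 r mu y J xh_min astar V B_n.
set d := fun j => c * r / lam j.
have mu_d j : mu j = 2 * d j by rewrite /mu /d; ring.
have r_ge0 : 0 <= r by rewrite /r /rate sqrtr_ge0.
have d_ge0 j : 0 <= d j by rewrite /d divr_ge0 ?mulr_ge0 // ltW.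
have V_le_d j : `|V j / lam j| <= d j.
  by rewrite normrM normfV (gtr0_norm (lam_gt0 j)) ler_wpM2r // invr_ge0 ltW.
have J_sep b : J b = \sum_j lasso_term (a0 j) (V j / lam j) (d j) (b j).
  rewrite /J -big_split /=; apply: eq_bigr => j _.
  rewrite emp_inner_residual ?lt0r_neq0 // /lasso_term mu_d; congr (_ ^+ 2 + _).
  by congr (_ + _ / _); rewrite /V /emp_inner_data; under eq_bigr do rewrite mulrC.
have astar_oracle j : astar j = oracle_coef (a0 j) (d j) by rewrite /astar mu_d.
have penalty_sep : 4 * c * r * \sum_(j < n | mu j < `|a0 j|) `|xh j - a0 j| / lam j
    = \sum_j (if 2 * d j < `|a0 j| then 4 * d j * `|xh j - a0 j| else 0).
  rewrite mulr_sumr big_mkcond; apply: eq_bigr => j _; rewrite mu_d.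
  by case: ifP => _; rewrite ?mulr0 // /d; ring.
rewrite !comb_sub !emp_norm2_comb // penalty_sep.
under [X in _ <= X + _]eq_bigr do rewrite astar_oracle.
apply: (lasso_oracle_inequality d_ge0 V_le_d).
rewrite -J_sep (_ : \sum_j _ = J astar) ?xh_min //.
by rewrite J_sep; apply: eq_bigr => j _; rewrite astar_oracle.
Qed.
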